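(* Let $T\in U(n,1)$ be unipotent (parabolic) and $S\in U(n,1)$ elliptic. Then $ST=TS$ if and only if $T(\mathrm{fix}(S))=\mathrm{fix}(S)$ and $S(\mathrm{fix}(T))=\mathrm{fix}(T)$.
   Context: $U(n,1)$ is the unitary group of a Hermitian form of signature $(n,1)$ on $\mathbb{C}^{n+1}$; it acts on complex hyperbolic space $H^n_{\mathbb{C}}$ (projectivized negative vectors) and its closure $\overline{H^n_{\mathbb{C}}}$ (adding projectivized null vectors). For $g\in U(n,1)$, $\mathrm{fix}(g)$ is the set of points of $\overline{H^n_{\mathbb{C}}}$ fixed by $g$. An element is elliptic if it fixes a point of $H^n_{\mathbb{C}}$. *)

From HB Require Import structures.
From mathcomp Require Import all_boot all_order all_algebra.
From mathcomp Require Import complex.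
From mathcomp Require Import reals classical_sets.
Set Implicit Arguments. Unset Strict Implicit. Unset Printing Implicit Defensive.
Import Order.TTheory GRing.Theory Num.Theory.
Local Open Scope ring_scope.
Local Open Scope classical_set_scope.

Definition Jmx (R : realType) (n : nat) : 'M[R[i]]_(n.+1) :=
  diag_mx (\row_(i < n.+1) if (i : nat) == n then -1 else 1).

Definition herm (R : realType) (n : nat) (z w : 'cV[R[i]]_(n.+1)) : R[i] :=
  ((map_mx Num.conj w)^T *m Jmx R n *m z) ord0 ord0.

Definition Un1 (R : realType) (n : nat) : set 'M[R[i]]_(n.+1) :=
  [set A | (map_mx Num.conj A)^T *m Jmx R n *m A = Jmx R n].

(* Points of the closure of complex hyperbolic space, represented by
   (all) their homogeneous coordinate vectors: nonzero z with <z,z> <= 0.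
   z represents a point of H^n_C iff <z,z> < 0. *)
Definition closedHvec (R : realType) (n : nat) : set 'cV[R[i]]_(n.+1) :=
  [set z | z != 0 /\ herm z z <= 0].

(* g fixes the point [z] iff z is an eigenvector of g. fix g is represented
   by the (scalar-saturated) set of all representatives of fixed points. *)
Definition fixpts (R : realType) (n : nat) (g : 'M[R[i]]_(n.+1))
  : set 'cV[R[i]]_(n.+1) :=
  [set z | @closedHvec R n z /\ exists l : R[i], g *m z = l *: z].

Definition act_image (R : realType) (n : nat) (g : 'M[R[i]]_(n.+1))
  (F : set 'cV[R[i]]_(n.+1)) : set 'cV[R[i]]_(n.+1) :=
  (fun z => g *m z) @` F.

Definition elliptic (R : realType) (n : nat) (g : 'M[R[i]]_(n.+1)) : Prop :=
  @Un1 R n g /\ exists z : 'cV[R[i]]_(n.+1),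
    z != 0 /\ herm z z < 0 /\ exists l : R[i], g *m z = l *: z.

Definition unipotent (R : realType) (n : nat) (g : 'M[R[i]]_(n.+1)) : Prop :=
  @Un1 R n g /\ exists k : nat, (g - 1) ^+ k = 0.

(* The forward direction is general: a unitary matrix commuting with B maps
   the eigenvectors of B onto themselves.  For the converse let v be a
   negative eigenvector of S with eigenvalue mu.  Every negative
   mu-eigenvector of S is a fixed point of S, hence the image under T of one;
   comparing eigenvalues through the form shows that T permutes the negative
   mu-eigenvectors, so the space W orthogonal to them is T-invariant.  W is
   orthogonal to v, hence positive definite, and a unipotent isometry of a
   positive definite space is the identity.  The columns of S - mu lie in W,
   so T (S - mu) = S - mu; taking adjoints for the form gives
   (S - mu) T = S - mu as well, and the two identities together say ST = TS. *)
From HB Require Import structures.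
From mathcomp Require Import all_boot all_order all_algebra.
From mathcomp Require Import complex.
From mathcomp Require Import reals classical_sets.
Set Implicit Arguments. Unset Strict Implicit. Unset Printing Implicit Defensive.
Import Order.TTheory GRing.Theory Num.Theory.
Local Open Scope ring_scope.

Section ComplexHyperbolic.
Variables (R : realType) (n : nat).
Local Notation C := R[i].
Local Notation J := (Jmx R n).
Local Notation adj A := (map_mx Num.conj A)^T.
Local Notation herm := (@herm R n).
Local Notation Un1 := (@Un1 R n).
Local Notation fixpts := (@fixpts R n).
Implicit Types (z w e x y u v : 'cV[C]_(n.+1)) (A B S T M : 'M[C]_(n.+1)).

Lemma adjM p q r (A : 'M[C]_(p, q)) (B : 'M[C]_(q, r)) :
  adj (A *m B) = adj B *m adj A.
Proof. by rewrite map_mxM trmx_mul. Qed.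

Lemma adjB A B : adj (A - B) = adj A - adj B.
Proof. by apply/matrixP => i j; rewrite !mxE rmorphB. Qed.

Lemma adj_scalar (c : C) : adj (c%:M : 'M[C]_(n.+1)) = c^*%:M.
Proof. by apply/matrixP => i j; rewrite !mxE rmorphMn eq_sym. Qed.

Lemma adjJ : adj J = J.
Proof.
apply/matrixP => i j; rewrite !mxE rmorphMn (eq_sym j i).
case: (eqVneq i j) => [->|_]; rewrite ?mulr0n ?rmorph0 // !mulr1n.
by case: ifP; rewrite ?rmorphN rmorph1.
Qed.

Lemma mulJJ : J *m J = 1%:M.
Proof.
rewrite mulmx_diag; apply/matrixP => i j; rewrite !mxE.
by case: ifP; rewrite ?mulN1r ?opprK ?mulr1.
Qed.

Definition jadj A := J *m adj A *m J.

Lemma jadjM A B : jadj (A *m B) = jadj B *m jadj A.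
Proof.
by rewrite /jadj adjM !mulmxA -[_ *m J *m J]mulmxA mulJJ mulmx1.
Qed.

Lemma jadjB_scalar A (c : C) : jadj (A - c%:M) = jadj A - c^*%:M.
Proof.
rewrite /jadj adjB adj_scalar mulmxBr mulmxBl mul_mx_scalar -scalemxAl.
by rewrite mulJJ scalemx1.
Qed.

Lemma Un1_mulVmx A : Un1 A -> jadj A *m A = 1%:M.
Proof. by rewrite /Un1 /= /jadj => HA; rewrite -!mulmxA (mulmxA (adj A)) HA mulJJ. Qed.

Lemma Un1_mulmxV A : Un1 A -> A *m jadj A = 1%:M.
Proof. by move/Un1_mulVmx/mulmx1C. Qed.

Lemma mulmx_cvP A B : (forall z, A *m z = B *m z) -> A = B.
Proof.
move=> eqAB; apply/matrixP => i j.
have := congr1 (fun z : 'cV[C]_(n.+1) => z i 0) (eqAB (delta_mx j 0)).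
by rewrite -!colE !mxE.
Qed.

Lemma hermE z w :
  herm z w = \sum_i (w i 0)^* * (if (i : nat) == n then -1 else 1) * z i 0.
Proof.
rewrite /herm mxE; apply: eq_bigr => i _; rewrite mul_mx_diag !mxE.
by congr (_ * _ * _); apply: congr1; apply: val_inj.
Qed.

Lemma hermDl z1 z2 w : herm (z1 + z2) w = herm z1 w + herm z2 w.
Proof. by rewrite /herm mulmxDr mxE. Qed.

Lemma hermZl c z w : herm (c *: z) w = c * herm z w.
Proof. by rewrite /herm -scalemxAr mxE. Qed.

Lemma hermBl z1 z2 w : herm (z1 - z2) w = herm z1 w - herm z2 w.
Proof. by rewrite hermDl -scaleN1r hermZl mulN1r. Qed.

Lemma herm0l w : herm 0 w = 0.
Proof. by rewrite -(scale0r 0) hermZl mul0r. Qed.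

Lemma herm_sym z w : herm w z = (herm z w)^*.
Proof.
rewrite !hermE rmorph_sum; apply: eq_bigr => i _; rewrite !rmorphM /= conjCK.
have -> : (if (i : nat) == n then -1 else 1 : C)^* = if (i : nat) == n then -1 else 1.
  by case: ifP; rewrite ?rmorphN rmorph1.
by rewrite mulrC mulrA -!mulrA [X in _ * X = _]mulrC.
Qed.

Lemma hermZr c z w : herm z (c *: w) = c^* * herm z w.
Proof. by rewrite herm_sym hermZl rmorphM /= -herm_sym. Qed.

Lemma hermBr z w1 w2 : herm z (w1 - w2) = herm z w1 - herm z w2.
Proof. by rewrite herm_sym hermBl rmorphB /= -!herm_sym. Qed.

Lemma herm_Un1 A z w : Un1 A -> herm (A *m z) (A *m w) = herm z w.
Proof.
rewrite /Un1 /= => HA; rewrite /herm adjM -!mulmxA (mulmxA (adj A)).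
by rewrite (mulmxA (adj A *m J)) HA.
Qed.

Lemma herm_last0 z : z ord_max 0 = 0 -> herm z z = \sum_i `|z i 0| ^+ 2.
Proof.
move=> z_n0; rewrite hermE; apply: eq_bigr => i _; rewrite normCK mulrC.
case: eqP => [i_n | _]; last by rewrite mulr1 mulrC.
have -> : i = ord_max by apply: val_inj.
by rewrite z_n0 !mul0r.
Qed.

Lemma herm_last0_ge0 z : z ord_max 0 = 0 -> 0 <= herm z z.
Proof. by move/herm_last0->; apply: sumr_ge0 => i _; rewrite exprn_ge0. Qed.

Lemma herm_last0_le0_eq0 z : z ord_max 0 = 0 -> herm z z <= 0 -> z = 0.
Proof.
move=> z_n0 zz_le0; have zz0 : herm z z = 0.
  by apply/le_anti; rewrite zz_le0 herm_last0_ge0.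
move: zz0; rewrite herm_last0 // => /psumr_eq0P z0; apply/matrixP => i j.
rewrite (ord1 j) !mxE; apply/eqP; rewrite -normr_eq0 -sqrf_eq0.
by apply/eqP/z0 => // k _; rewrite exprn_ge0.
Qed.

(* Eliminating the last coordinate between y and v leaves a vector on which
   the form is positive semidefinite. *)
Lemma herm_orth_negative_eq0 v y :
  herm v v < 0 -> herm y v = 0 -> herm y y <= 0 -> y = 0.
Proof.
move=> vv_lt0 yv0 yy_le0.
have vy0 : herm v y = 0 by rewrite herm_sym yv0 rmorph0.
set a : C := y ord_max 0; set b : C := v ord_max 0.
have b_neq0 : b != 0.
  by apply: contraTneq vv_lt0 => /herm_last0_ge0 vv_ge0; rewrite le_gtF.
set c := b *: y - a *: v.
have c0 : c = 0.
  apply: herm_last0_le0_eq0; first by rewrite !mxE -/a -/b mulrC subrr.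
  rewrite /c hermBl !hermBr !hermZl !hermZr yv0 vy0 !mulr0 subr0 sub0r opprK.
  rewrite !mulrA -!normCK; apply: ler_wnDl.
    exact: mulr_ge0_le0 (exprn_ge0 _ _) yy_le0.
  exact: mulr_ge0_le0 (exprn_ge0 _ _) (ltW vv_lt0).
have a0 : a = 0.
  have := congr1 (herm^~ v) c0; rewrite /= herm0l hermBl !hermZl yv0 mulr0 sub0r.
  by move/eqP; rewrite oppr_eq0 mulf_eq0 (negbTE (ltr0_neq0 vv_lt0)) orbF => /eqP.
move: c0; rewrite /c a0 scale0r subr0 => /eqP.
by rewrite scaler_eq0 (negbTE b_neq0) => /eqP.
Qed.

Lemma herm_Un1_eigen A z w (l m : C) : Un1 A ->
  A *m z = l *: z -> A *m w = m *: w -> l * m^* * herm z w = herm z w.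
Proof. by move=> HA Az Aw; rewrite -mulrA -hermZr -hermZl -Az -Aw herm_Un1. Qed.

Lemma Un1_eigenvalue_norm A z (l : C) :
  Un1 A -> A *m z = l *: z -> herm z z != 0 -> l * l^* = 1.
Proof.
move=> HA Az zz_neq0; apply: (mulIf zz_neq0).
by rewrite mul1r (herm_Un1_eigen HA Az Az).
Qed.

Lemma Un1_eigenvalue_eq A z w (l m : C) : Un1 A ->
  A *m z = l *: z -> A *m w = m *: w -> m * m^* = 1 -> herm z w != 0 -> l = m.
Proof.
move=> HA Az Aw mm1 zw_neq0.
have lm1 : l * m^* = 1.
  by apply: (mulIf zw_neq0); rewrite mul1r (herm_Un1_eigen HA Az Aw).
by rewrite -[l]mulr1 -mm1 mulrCA lm1 mulr1.
Qed.

Lemma herm_Un1_range_eigen A z e (m : C) : Un1 A -> m * m^* = 1 ->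
  A *m e = m *: e -> herm (A *m z - m *: z) e = 0.
Proof.
move=> HA mm1 Ae; have := herm_Un1 z e HA; rewrite Ae hermZr => zeE.
by rewrite hermBl hermZl -zeE mulrA mm1 mul1r subrr.
Qed.

Lemma fixpts_mulmx A B z : Un1 A -> B *m A = A *m B ->
  fixpts B (A *m z) <-> fixpts B z.
Proof.
move=> HA BA; have A_inj z1 z2 : A *m z1 = A *m z2 -> z1 = z2.
  by move/(congr1 (mulmx (jadj A))); rewrite !mulmxA Un1_mulVmx // !mul1mx.
rewrite /fixpts /closedHvec /= herm_Un1 //.
split => -[[z_neq0 zz_le0] [l Bz]]; (split; last exists l).
- by split=> //; apply: contraNneq z_neq0 => ->; rewrite mulmx0.
- by apply: A_inj; rewrite mulmxA -BA -mulmxA Bz scalemxAr.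
- by split=> //; apply: contraNneq z_neq0 => z0; apply/eqP/A_inj; rewrite z0 mulmx0.
- by rewrite mulmxA BA -mulmxA Bz scalemxAr.
Qed.

Lemma act_image_fixpts A B : Un1 A -> B *m A = A *m B ->
  act_image A (fixpts B) = fixpts B.
Proof.
move=> HA BA; have AV w : A *m (jadj A *m w) = w by rewrite mulmxA Un1_mulmxV // mul1mx.
rewrite classical_sets.eqEsubset; split.
  by move=> _ [z Bz <-]; apply/fixpts_mulmx.
move=> w Bw; exists (jadj A *m w); last exact: AV.
by rewrite -(fixpts_mulmx (jadj A *m w) HA BA) AV.
Qed.

Section UnipotentOnDefinite.
Variables (T : 'M[C]_(n.+1)) (P : 'cV[C]_(n.+1) -> Prop).
Hypotheses (HT : Un1 T) (PB : forall y1 y2, P y1 -> P y2 -> P (y1 - y2)).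
Hypotheses (PT : forall y, P y -> P (T *m y)).
Hypothesis Pdef : forall y, P y -> herm y y <= 0 -> y = 0.

Local Notation N := (T - 1%:M).

Lemma shear_isotropic x u : T *m x = x + u -> T *m u = u -> herm u u = 0.
Proof.
move=> Tx Tu; apply: (@addrI _ (herm x u)).
by rewrite addr0 -hermDl -Tx -{1}Tu herm_Un1.
Qed.

Lemma P_mulN y : P y -> P (N *m y).
Proof. by move=> Py; rewrite mulmxBl mul1mx; apply: PB => //; apply: PT. Qed.

Lemma P_mulNX j y : P y -> P (N ^+ j *m y).
Proof.
move=> Py; elim: j => [|j IH]; first by rewrite expr0 mul1mx.
by rewrite exprS -mulmxE -mulmxA; apply: P_mulN.
Qed.

(* Descending induction on the nilpotency order: if N^(j+2) kills P then
   so does N^(j+1), because u = N^(j+1) y is T-fixed with T x = x + u. *)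
Lemma unipotent_fix_definite k y : (T - 1) ^+ k = 0 -> P y -> T *m y = y.
Proof.
move=> Nk Py.
suff N0 : N *m y = 0 by apply/eqP; rewrite -subr_eq0 -[y in _ - y]mul1mx -mulmxBl N0.
have descent j : (forall y, P y -> N ^+ j.+1 *m y = 0) -> forall y, P y -> N *m y = 0.
  elim: j => [|j IH] Nj; first by move=> y'; rewrite -[N]expr1; apply: Nj.
  apply: IH => y' Py'; set x := N ^+ j *m y'; set u := N *m x.
  have -> : N ^+ j.+1 *m y' = u by rewrite /u /x mulmxA mulmxE -exprS.
  have Nu : N *m u = 0 by rewrite /u /x !mulmxA !mulmxE -mulrA -!exprS Nj.
  have Tx : T *m x = x + u by rewrite /u mulmxBl mul1mx addrC subrK.
  have Tu : T *m u = u by move/eqP: Nu; rewrite mulmxBl mul1mx subr_eq0 => /eqP.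
  apply: Pdef; first by apply/P_mulN/P_mulNX.
  by rewrite (shear_isotropic Tx Tu).
by apply: (descent k) => // y' _; rewrite exprSr Nk mul0r mul0mx.
Qed.

End UnipotentOnDefinite.

Lemma stab_fixpts_shift_fixed S T v (mu : C) k :
  Un1 S -> Un1 T -> (T - 1) ^+ k = 0 -> herm v v < 0 -> S *m v = mu *: v ->
  act_image T (fixpts S) = fixpts S -> T *m (S - mu%:M) = S - mu%:M.
Proof.
move=> HS HT Nk vv_lt0 Sv TS.
have mu1 := Un1_eigenvalue_norm HS Sv (ltr0_neq0 vv_lt0).
pose P y := forall e, herm e e < 0 -> S *m e = mu *: e -> herm y e = 0.
have PB y1 y2 : P y1 -> P y2 -> P (y1 - y2).
  by move=> P1 P2 e ee_lt0 Se; rewrite hermBl P1 // P2 // subrr.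
have Pdef y : P y -> herm y y <= 0 -> y = 0.
  by move=> Py; apply: herm_orth_negative_eq0 vv_lt0 (Py v vv_lt0 Sv).
have PT y : P y -> P (T *m y).
  move=> Py e ee_lt0 Se.
  have : fixpts S e.
    split; last by exists mu.
    split; last exact: ltW.
    by apply: contraTneq ee_lt0 => ->; rewrite herm0l ltxx.
  rewrite -TS => -[z [[z_neq0 zz_le0] [l Sz]] Tz].
  have zv_neq0 : herm z v != 0.
    apply: contra_neq z_neq0 => zv0.
    exact: herm_orth_negative_eq0 vv_lt0 zv0 zz_le0.
  rewrite -Tz herm_Un1 //; apply: Py; first by rewrite -(herm_Un1 z z HT) Tz.
  by rewrite Sz (Un1_eigenvalue_eq HS Sz Sv mu1 zv_neq0).
apply: mulmx_cvP => z; rewrite -mulmxA.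
apply: (unipotent_fix_definite HT PB PT Pdef Nk) => e ee_lt0 Se.
by rewrite mulmxBl mul_scalar_mx herm_Un1_range_eigen.
Qed.

Lemma Un1_mul_jadj_shift S (mu : C) : Un1 S -> mu * mu^* = 1 ->
  - mu *: (S *m jadj (S - mu%:M)) = S - mu%:M.
Proof.
move=> HS mu1; rewrite jadjB_scalar mulmxBr Un1_mulmxV // mul_mx_scalar scalerBr scalerA.
by rewrite mulNr mu1 scaleN1r opprK scaleNr scalemx1 addrC.
Qed.

Lemma Un1_shift_commute S T (mu : C) : Un1 S -> Un1 T -> mu * mu^* = 1 ->
  T *m (S - mu%:M) = S - mu%:M -> S *m T = T *m S.
Proof.
move=> HS HT mu1 TM.
have MT : (S - mu%:M) *m T = S - mu%:M.
  have jMT : jadj (S - mu%:M) = jadj (S - mu%:M) *m T.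
    by rewrite -{2}TM jadjM -mulmxA Un1_mulVmx // mulmx1.
  by rewrite -{1}(Un1_mul_jadj_shift HS mu1) -scalemxAl -mulmxA -jMT Un1_mul_jadj_shift.
move: TM MT; rewrite mulmxBr mulmxBl mul_mx_scalar mul_scalar_mx => TM MT.
by apply: (addIr (- (mu *: T))); rewrite MT TM.
Qed.

End ComplexHyperbolic.

Theorem lemma3p5 (R : realType) (n : nat) (T S : 'M[R[i]]_(n.+1)) :
  unipotent T -> elliptic S ->
  (S *m T = T *m S <->
   (act_image T (fixpts S) = fixpts S /\ act_image S (fixpts T) = fixpts T)).
Proof.
move=> [HT [k Nk]] [HS [v [_ [vv_lt0 [mu Sv]]]]]; split.
  by move=> ST; split; apply: act_image_fixpts => //; rewrite ST.
move=> [TS _]; apply: (Un1_shift_commute HS HT).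
  exact: Un1_eigenvalue_norm HS Sv (ltr0_neq0 vv_lt0).
exact: stab_fixpts_shift_fixed HS HT Nk vv_lt0 Sv TS.
Qed.
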